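(* For $s \in \{-1,1\}$ and an integer $B \geq 3$, let $I_s(B) = \{t \in \mathbb{Z} : 1 \le t \le B,\ t^2 - 4s > 0\}$, let $N_s(B)$ be the number of distinct square-free parts of the integers $t^2 - 4s$, $t \in I_s(B)$, and let $\Delta_s(B) = \#I_s(B) - N_s(B)$. Then, as $B \to \infty$, $\Delta_{-1}(B) \sim B^{1/3}$ and $\Delta_{1}(B) \sim B^{1/2}$.
   Context: The square-free part of a nonzero integer $n$ is the unique square-free integer $M$ with $n = M r^2$, $r \ge 1$. *)

From mathcomp Require Import all_boot all_algebra.
Set Implicit Arguments. Unset Strict Implicit. Unset Printing Implicit Defensive.
Import GRing.Theory Num.Theory.

Definition squarefree (M : nat) : bool :=
  (0 < M)%N && [forall d : 'I_M.+1, (1 < d)%N ==> ~~ (d * d %| M)%N].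

(* M is the square-free part of n: M square-free and n = M r^2 for some r
   (r >= 1 automatically when n > 0; any such r satisfies r <= n). *)
Definition is_sqfree_part (M n : nat) : bool :=
  squarefree M && [exists r : 'I_n.+1, n == (M * r ^ 2)%N].

Definition disc (s : int) (t : nat) : int := ((t%:Z) ^+ 2 - 4 * s)%R.

Definition Iset (s : int) (B : nat) : seq nat :=
  [seq t <- iota 1 B | (0 < disc s t)%R].

(* Every square-free part M of a positive n satisfies M <= n,
   so searching M below the sum of all the values (+1) is exhaustive. *)
Definition Nset (s : int) (B : nat) : seq nat :=
  [seq M <- iota 0 (\sum_(t <- Iset s B) `|disc s t|%N).+1
     | has (fun t => is_sqfree_part M `|disc s t|%N) (Iset s B)].

Definition card_I (s : int) (B : nat) : nat := size (Iset s B).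
Definition card_N (s : int) (B : nat) : nat := size (Nset s B).

Definition s_neg : int := (-1)%R.
Definition s_pos : int := 1%R.

(* If t < u in I_s(B) have the same square-free part M, then both give solutions of
   x^2 - M y^2 = 4s, i.e. numbers (x + y sqrt M)/2 of norm s.  Every positive solution is
   a power eps^k of the fundamental one (a, b), with x-coordinate the Lucas number
   V_k(a, s), and for s = -1 only odd powers occur.  Hence a repeated u is either the
   second power, V_3(a) = a^3 + 3a for s = -1 resp. V_2(a) = a^2 - 2 for s = 1 (and each of
   these really repeats its base a), or a higher power, which is at least a^5 resp.
   (a - 1)^3 with an exponent of size O(log B).  The first kind contributes B^(1/3)
   resp. B^(1/2) + O(1), the second only O(B^(1/5) log B) resp. O(B^(1/3) log B). *)

From Stdlib Require Import ZArith Lia Psatz Classical Reals.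
From Coquelicot Require Import Coquelicot.
From mathcomp Require Import all_boot all_algebra zify.

Set Implicit Arguments. Unset Strict Implicit.

(** * Lucas sequences *)

Section Lucas.
Local Open Scope Z_scope.
Variables P Q : Z.

Fixpoint lucasV (k : nat) : Z :=
  match k with
  | O => 2
  | S k' => match k' with O => P | S k'' => P * lucasV k' - Q * lucasV k'' end
  end.

Fixpoint lucasU (k : nat) : Z :=
  match k with
  | O => 0
  | S k' => match k' with O => 1 | S k'' => P * lucasU k' - Q * lucasU k'' end
  end.

Lemma lucasV_SS k : lucasV k.+2 = P * lucasV k.+1 - Q * lucasV k.
Proof. by []. Qed.

Lemma lucasU_SS k : lucasU k.+2 = P * lucasU k.+1 - Q * lucasU k.
Proof. by []. Qed.

Lemma lucas_succ k :
  2 * lucasV k.+1 = P * lucasV k + (P * P - 4 * Q) * lucasU k /\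
  2 * lucasU k.+1 = P * lucasU k + lucasV k.
Proof.
suff [] : (2 * lucasV k.+1 = P * lucasV k + (P * P - 4 * Q) * lucasU k /\
           2 * lucasU k.+1 = P * lucasU k + lucasV k) /\
          (2 * lucasV k.+2 = P * lucasV k.+1 + (P * P - 4 * Q) * lucasU k.+1 /\
           2 * lucasU k.+2 = P * lucasU k.+1 + lucasV k.+1) by [].
elim: k => [|k [[IHV0 IHU0] [IHV IHU]]]; first by cbn [lucasV lucasU]; split; split; ring.
split=> //; rewrite lucasV_SS lucasU_SS.
have -> : 2 * (P * lucasV k.+2 - Q * lucasV k.+1) =
          P * (2 * lucasV k.+2) - Q * (2 * lucasV k.+1) by ring.
have -> : 2 * (P * lucasU k.+2 - Q * lucasU k.+1) =
          P * (2 * lucasU k.+2) - Q * (2 * lucasU k.+1) by ring.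
by rewrite IHV IHU IHV0 IHU0 lucasV_SS; split; ring.
Qed.

(* With [P^2 - 4Q = M b^2], the pair [(V_k, b U_k)] encodes [2 eps^k] for
   [eps = (P + b sqrt M) / 2]; multiplying by [eps] is one step of the sequence. *)
Lemma lucas_mul_step M b k X Y :
  M * b * b = P * P - 4 * Q ->
  2 * X = P * lucasV k + M * b * (b * lucasU k) ->
  2 * Y = P * (b * lucasU k) + b * lucasV k ->
  X = lucasV k.+1 /\ Y = b * lucasU k.+1.
Proof.
move=> HM HX HY; have [EV EU] := lucas_succ k.
split; apply: (Z.mul_reg_l _ _ 2) => //.
- by rewrite HX EV -HM; ring.
- by rewrite (_ : 2 * (b * lucasU k.+1) = b * (2 * lucasU k.+1)); [rewrite EU HY; ring | ring].
Qed.

End Lucas.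

(** * The equation x^2 - M y^2 = 4n *)

Section Pell.
Local Open Scope Z_scope.

Definition pell_sol (n M x y : Z) : Prop := 1 <= x /\ 1 <= y /\ x * x - M * y * y = 4 * n.

(* Solutions of [x^2 - M y^2 = 4n] stand for [(x + y sqrt M) / 2]; the property says that
   [(x1 + y1 sqrt M) (x2 - y2 sqrt M) / 4] is again of this form, i.e. that quotients of
   units are integral. *)
Definition pell_quo_integral (M : Z) : Prop :=
  forall x1 y1 x2 y2 n1 n2,
    x1 * x1 - M * y1 * y1 = 4 * n1 -> x2 * x2 - M * y2 * y2 = 4 * n2 ->
  exists X Y, 2 * X = x1 * x2 - M * y1 * y2 /\ 2 * Y = y1 * x2 - x1 * y2.

Lemma pell_parity M x y n : ~ (4 | M) -> x * x - M * y * y = 4 * n ->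
  Z.even x = Z.even y /\ (Z.even M -> Z.even y).
Proof.
move=> M4 E; have Ee := f_equal Z.even E.
rewrite Z.even_sub !Z.even_mul orbb -orbA orbb in Ee.
case HM: (Z.even M); last first.
  by rewrite HM /= in Ee; case: (Z.even x) (Z.even y) Ee => [] [].
have [m Em] := proj1 (Z.even_spec M) HM.
have [p Ep] : Z.Even x by apply/Z.even_spec; rewrite HM /= in Ee; case: (Z.even x) Ee.
have Emy : m * y * y = 2 * (p * p - n) by subst; nia.
have Hm : Z.even m = false.
  by apply/negbTE/negP => /Z.even_spec [q Eq]; apply: M4; exists q; lia.
move: (f_equal Z.even Emy); rewrite !Z.even_mul Hm /= orbb => ->.
by rewrite Ep Z.even_mul.
Qed.

Lemma pell_quo_integral_ndvd4 M : ~ (4 | M) -> pell_quo_integral M.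
Proof.
move=> M4 x1 y1 x2 y2 n1 n2 E1 E2.
have [P1 D1] := pell_parity M4 E1; have [P2 D2] := pell_parity M4 E2.
have half z : Z.even z -> exists h, 2 * h = z.
  by move=> /Z.even_spec [h ->]; exists h.
have [X HX] : exists X, 2 * X = x1 * x2 - M * y1 * y2.
  apply: half; rewrite Z.even_sub !Z.even_mul P1 P2.
  by case: (Z.even M) D1 => [/(_ isT) ->|] //; case: (Z.even y1) (Z.even y2) => [] [].
have [Y HY] : exists Y, 2 * Y = y1 * x2 - x1 * y2.
  by apply: half; rewrite Z.even_sub !Z.even_mul P1 P2; case: (Z.even y1) (Z.even y2) => [] [].
by exists X, Y.
Qed.

(* Division by a solution [(a, b)] of norm [m = +-1]: [(X, Y) * (a, b) = (c, d)]. *)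
Lemma pell_div M a b c d m n X Y :
  m * m = 1 -> a * a - M * b * b = 4 * m -> c * c - M * d * d = 4 * n ->
  2 * X = m * (c * a - M * d * b) -> 2 * Y = m * (d * a - c * b) ->
  X * X - M * Y * Y = 4 * (m * n) /\ 2 * c = a * X + M * b * Y /\ 2 * d = a * Y + b * X.
Proof.
move=> Hm Eab Ecd HX HY.
have Em z : 2 * m * z * (a * a - M * b * b) = 8 * z.
  by rewrite Eab; transitivity (8 * (m * m) * z); [ring | rewrite Hm; ring].
split; [|split]; apply: (Z.mul_reg_l _ _ 4) => //.
- transitivity ((2 * X) * (2 * X) - M * ((2 * Y) * (2 * Y))); first ring.
  rewrite HX HY; transitivity ((m * m) * (c * c - M * d * d) * (a * a - M * b * b)); first ring.
  by rewrite Hm Eab Ecd; ring.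
- rewrite (_ : 4 * (a * X + M * b * Y) = 2 * (a * (2 * X) + M * b * (2 * Y))); last ring.
  by rewrite HX HY; transitivity (8 * c); [ring | rewrite -(Em c); ring].
- rewrite (_ : 4 * (a * Y + b * X) = 2 * (a * (2 * Y) + b * (2 * X))); last ring.
  by rewrite HX HY; transitivity (8 * d); [ring | rewrite -(Em d); ring].
Qed.

End Pell.

Section Descent.
Local Open Scope Z_scope.
Variables (M a b : Z).

(* [(X, Y)] is the quotient of a solution by the solution [(a, b)] (cf. [pell_div]);
   the inequalities locating it are proved after squaring. *)
Lemma pell_plus_descent c d X Y : 1 <= M -> pell_sol 1 M a b -> pell_sol 1 M c d -> b < d ->
  2 * X = c * a - M * d * b -> 2 * Y = d * a - c * b -> pell_sol 1 M X Y /\ Y < d.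
Proof.
move=> HM [Ha [Hb Eab]] [Hc [Hd Ecd]] Hbd.
have X_gt0 : M * d * b < c * a by apply: Z.square_lt_simpl_nonneg; nia.
have Y_gt0 : c * b < d * a by apply: Z.square_lt_simpl_nonneg; nia.
have Ha3 : 3 <= a by nia.
have Y_lt : (a - 2) * d < c * b by apply: Z.square_lt_simpl_nonneg; nia.
move=> HX HY.
have [EXY _] := @pell_div M a b c d 1 1 X Y erefl Eab Ecd ltac:(lia) ltac:(lia).
rewrite /pell_sol; lia.
Qed.

Lemma pell_minus_descent c d X Y : 1 <= M -> pell_sol (-1) M a b -> pell_sol (-1) M c d -> b < d ->
  2 * X = - (c * a - M * d * b) -> 2 * Y = - (d * a - c * b) -> pell_sol 1 M X Y /\ Y < d.
Proof.
move=> HM [Ha [Hb Eab]] [Hc [Hd Ecd]] Hbd.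
have X_gt0 : c * a < M * d * b by apply: Z.square_lt_simpl_nonneg; nia.
have Y_gt0 : d * a < c * b by apply: Z.square_lt_simpl_nonneg; nia.
have Y_lt : c * b < (a + 2) * d by apply: Z.square_lt_simpl_nonneg; nia.
move=> HX HY.
have [EXY _] := @pell_div M a b c d (-1) (-1) X Y erefl Eab Ecd HX HY.
rewrite /pell_sol; lia.
Qed.

Lemma pell_mixed_descent X Y c d : 1 <= M -> pell_sol (-1) M a b -> pell_sol 1 M X Y -> b <= Y ->
  2 * c = - (X * a - M * Y * b) -> 2 * d = - (Y * a - X * b) -> pell_sol (-1) M c d /\ d <= Y.
Proof.
move=> HM [Ha [Hb Eab]] [HX [HY EXY]] HbY.
have EX2 : X * X = M * Y * Y + 4 by lia.
have Ea2 : a * a = M * b * b - 4 by lia.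
have c_gt0 : X * a < M * Y * b.
  apply: Z.square_lt_simpl_nonneg; first nia.
  rewrite (_ : X * a * (X * a) = (M * b * b - 4) * (M * Y * Y + 4));
    last by rewrite -EX2 -Ea2; ring.
  have : b * b <= Y * Y by nia.
  nia.
have d_gt0 : Y * a < X * b.
  apply: Z.square_lt_simpl_nonneg; first nia.
  rewrite (_ : Y * a * (Y * a) = (M * b * b - 4) * (Y * Y)); last by rewrite -Ea2; ring.
  rewrite (_ : X * b * (X * b) = (M * Y * Y + 4) * (b * b)); last by rewrite -EX2; ring.
  nia.
have d_le : X * b < (a + 2) * Y + 1.
  apply: Z.square_lt_simpl_nonneg; first nia.
  rewrite (_ : X * b * (X * b) = (M * Y * Y + 4) * (b * b)); last by rewrite -EX2; ring.
  nia.
move=> Hc Hd.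
have [Ecd _] := @pell_div M a b X Y (-1) 1 c d erefl Eab EXY Hc Hd.
rewrite /pell_sol; lia.
Qed.

Lemma pell_mixed_small X Y c d : 2 <= M -> pell_sol (-1) M a b -> pell_sol 1 M X Y -> Y < b ->
  2 * c = - (X * a - M * Y * b) -> 2 * d = - (Y * a - X * b) -> pell_sol (-1) M (- c) d /\ d < b.
Proof.
move=> HM [Ha [Hb Eab]] [HX [HY EXY]] HYb.
have EX2 : X * X = M * Y * Y + 4 by lia.
have Ea2 : a * a = M * b * b - 4 by lia.
have c_lt0 : M * b * Y < a * X.
  apply: Z.square_lt_simpl_nonneg; first nia.
  rewrite (_ : a * X * (a * X) = (M * b * b - 4) * (M * Y * Y + 4));
    last by rewrite -EX2 -Ea2; ring.
  have : Y * Y + 3 <= b * b by nia.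
  nia.
have d_gt0 : a * Y < b * X.
  apply: Z.square_lt_simpl_nonneg; first nia.
  rewrite (_ : a * Y * (a * Y) = (M * b * b - 4) * (Y * Y)); last by rewrite -Ea2; ring.
  rewrite (_ : b * X * (b * X) = (M * Y * Y + 4) * (b * b)); last by rewrite -EX2; ring.
  nia.
have d_lt : b * X < 2 * b + a * Y.
  apply: Z.square_lt_simpl_nonneg; first nia.
  rewrite (_ : b * X * (b * X) = (M * Y * Y + 4) * (b * b)); last by rewrite -EX2; ring.
  rewrite (_ : (2 * b + a * Y) * (2 * b + a * Y) =
               4 * b * b + 4 * a * b * Y + (a * a) * (Y * Y)); last ring.
  rewrite Ea2.
  have : Y * Y < b * Y by nia.
  have : b * Y <= a * b * Y by nia.
  nia.
move=> Hc Hd.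
have [Ecd _] := @pell_div M a b X Y (-1) 1 c d erefl Eab EXY Hc Hd.
rewrite /pell_sol; lia.
Qed.

End Descent.

Section Classification.
Local Open Scope Z_scope.
Variables (M a b : Z).
Hypothesis quo_integral : pell_quo_integral M.

Lemma pell_plus_lucas : 1 <= M -> pell_sol 1 M a b ->
    (forall x y, pell_sol 1 M x y -> b <= y) ->
  forall c d, pell_sol 1 M c d -> exists k, c = lucasV a 1 k.+1 /\ d = b * lucasU a 1 k.+1.
Proof.
move=> HM Hab Hmin c d Hcd; have Hd : 0 <= d by case: Hcd; lia.
move: c Hcd; elim/Z_lt_induction: d / Hd => d IH c Hcd.
have Hbd := Hmin c d Hcd.
have [[Ha [Hb Eab]] [Hc [Hd Ecd]]] := (Hab, Hcd).
case: (Z.eq_dec d b) => [Edb|Ndb].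
  by exists 0%nat; rewrite /= Edb; split; [nia | ring].
have [X [Y [HX HY]]] := quo_integral Ecd Eab.
have [HXY HYd] := pell_plus_descent HM Hab Hcd ltac:(lia) HX HY.
have [k [EX EY]] := IH Y ltac:(case: HXY; lia) X HXY.
have [_ [Rc Rd]] := @pell_div M a b c d 1 1 X Y erefl Eab Ecd ltac:(lia) ltac:(lia).
rewrite EX EY in Rc Rd.
by exists k.+1; apply: (lucas_mul_step (M := M)) => //; lia.
Qed.

Lemma pell_minus_lucas : 2 <= M -> pell_sol (-1) M a b ->
    (forall x y, pell_sol (-1) M x y -> b <= y) ->
  forall c d, pell_sol (-1) M c d ->
  exists j, c = lucasV a (-1) (2 * j).+1 /\ d = b * lucasU a (-1) (2 * j).+1.
Proof.
move=> HM Hab Hmin c d Hcd; have HM1 : 1 <= M by lia.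
have Hd : 0 <= d by case: Hcd; lia.
move: c Hcd; elim/Z_lt_induction: d / Hd => d IH c Hcd.
have Hbd := Hmin c d Hcd.
have [[Ha [Hb Eab]] [Hc [Hd Ecd]]] := (Hab, Hcd).
case: (Z.eq_dec d b) => [Edb|Ndb].
  by exists 0%nat; rewrite /= Edb; split; [nia | ring].
(* Dividing by the fundamental solution twice returns to norm -1; the intermediate
   quotient has norm 1 and, by minimality of [b], y-coordinate at least [b]. *)
have [X0 [Y0 [HX0 HY0]]] := quo_integral Ecd Eab.
have HX : 2 * (- X0) = - (c * a - M * d * b) by lia.
have HY : 2 * (- Y0) = - (d * a - c * b) by lia.
have [HXY HYd] := pell_minus_descent HM1 Hab Hcd ltac:(lia) HX HY.
have [_ [Rc Rd]] := @pell_div M a b c d (-1) (-1) _ _ erefl Eab Ecd HX HY.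
have [_ [_ EXY]] := HXY.
have [X1 [Y1 [HX1 HY1]]] := quo_integral EXY Eab.
have HX' : 2 * (- X1) = - ((- X0) * a - M * (- Y0) * b) by lia.
have HY' : 2 * (- Y1) = - ((- Y0) * a - (- X0) * b) by lia.
case: (Z.lt_ge_cases (- Y0) b) => [HYb|HbY].
  have [Hsol Hlt] := pell_mixed_small HM Hab HXY HYb HX' HY'.
  by have := Hmin _ _ Hsol; lia.
have [Hsol HY1d] := pell_mixed_descent HM1 Hab HXY HbY HX' HY'.
have [j [EX1 EY1]] := IH (- Y1) ltac:(case: Hsol; lia) (- X1) Hsol.
have [_ [RX RY]] := @pell_div M a b _ _ (-1) 1 _ _ erefl Eab EXY HX' HY'.
rewrite EX1 EY1 in RX RY.
have EM : M * b * b = a * a - 4 * (-1) by lia.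
have [E0 E1] := lucas_mul_step EM RX RY.
rewrite E0 E1 in Rc Rd.
have [E2 E3] := lucas_mul_step EM Rc Rd.
by exists j.+1; rewrite (_ : (2 * j.+1).+1 = (2 * j).+3)%N; [split | lia].
Qed.

End Classification.

Section Minimal.
Local Open Scope Z_scope.

Lemma pell_sol_min n M x y : pell_sol n M x y ->
  exists a b, pell_sol n M a b /\ forall x' y', pell_sol n M x' y' -> b <= y'.
Proof.
move=> Hxy; have Hy : 0 <= y by case: Hxy; lia.
move: x Hxy; elim/Z_lt_induction: y / Hy => y IH x Hxy.
case: (classic (exists x' y', pell_sol n M x' y' /\ y' < y)) => [[x' [y' [H' Hlt]]] | Hno].
  have : 0 <= y' by case: H'; lia.
  by move=> Hy'; apply: (IH y') H'; lia.
exists x, y; split=> // x' y' H'.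
by have [Hlt|//] := Z.lt_ge_cases y' y; case: Hno; eauto.
Qed.

End Minimal.

Section LucasGrowth.
Local Open Scope Z_scope.
Variable a : Z.

Section MinusOne.
Hypothesis a_ge1 : 1 <= a.
Notation V := (lucasV a (-1)).

Lemma lucasV_minus_ge0 k : 0 <= V k.
Proof.
suff : 0 <= V k /\ 0 <= V k.+1 by case.
elim: k => [|k [IH1 IH2]]; first by rewrite /=; lia.
by split=> //; rewrite lucasV_SS; nia.
Qed.

Lemma lucasV_minus_succ k : V k.+1 <= V k.+2.
Proof. by rewrite lucasV_SS; have := @lucasV_minus_ge0 k; have := @lucasV_minus_ge0 k.+1; nia. Qed.

Lemma lucasV_minus_mono k m : (k <= m)%N -> V k.+1 <= V m.+1.
Proof.
move=> /subnKC <-; elim: (m - k)%N => [|n IH]; first by rewrite addn0; lia.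
by rewrite addnS; have := @lucasV_minus_succ (k + n); lia.
Qed.

Lemma lucasV_minus_odd_ge j : 2 ^ Z.of_nat j <= V (2 * j).+1.
Proof.
elim: j => [|j IH]; first by rewrite /=; lia.
rewrite (_ : (2 * j.+1).+1 = (2 * j).+3)%N; last lia.
rewrite Nat2Z.inj_succ Z.pow_succ_r; last lia.
rewrite lucasV_SS; have := @lucasV_minus_succ (2 * j); have := @lucasV_minus_ge0 (2 * j).+2; nia.
Qed.

Lemma lucasV_minus_3 : V 3 = a * a * a + 3 * a.
Proof. by cbn [lucasV]; ring. Qed.

Lemma lucasV_minus_5 : V 5 = a * a * a * a * a + 5 * (a * a * a) + 5 * a.
Proof. by cbn [lucasV]; ring. Qed.

End MinusOne.

Section PlusOne.
Hypothesis a_ge3 : 3 <= a.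
Notation V := (lucasV a 1).

Lemma lucasV_plus_succ k : 1 <= V k.+1 /\ (a - 1) * V k.+1 <= V k.+2.
Proof.
elim: k => [|k [IH1 IH2]]; first by rewrite /=; nia.
by split; [nia | rewrite [V k.+3]lucasV_SS; nia].
Qed.

Lemma lucasV_plus_mono k m : (k <= m)%N -> V k.+1 <= V m.+1.
Proof.
move=> /subnKC <-; elim: (m - k)%N => [|n IH]; first by rewrite addn0; lia.
by rewrite addnS; have := @lucasV_plus_succ (k + n); nia.
Qed.

Lemma lucasV_plus_ge_pow k : (a - 1) ^ Z.of_nat k.+1 <= V k.+1.
Proof.
elim: k => [|k IH]; first by rewrite /=; lia.
rewrite Nat2Z.inj_succ Z.pow_succ_r; last lia.
by have := @lucasV_plus_succ k; nia.
Qed.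

Lemma lucasV_plus_2 : V 2 = a * a - 2.
Proof. by cbn [lucasV]; ring. Qed.

End PlusOne.
End LucasGrowth.

Section Repeats.
Local Open Scope Z_scope.
Variable M : Z.
Hypothesis quo_integral : pell_quo_integral M.

Lemma pell_minus_repeat t r u r' : 2 <= M -> pell_sol (-1) M t r -> pell_sol (-1) M u r' -> t < u ->
  exists a j, 1 <= a /\ (0 < j)%N /\ u = lucasV a (-1) (2 * j).+1.
Proof.
move=> HM Ht Hu Htu.
have [a [b [Hab Hmin]]] := pell_sol_min Ht.
have [j1 [Et _]] := pell_minus_lucas quo_integral HM Hab Hmin Ht.
have [[|j] [Eu _]] := pell_minus_lucas quo_integral HM Hab Hmin Hu; have [Ha _] := Hab.
  have Eua : u = a by rewrite Eu.
  by have := lucasV_minus_mono Ha (leq0n (2 * j1)); rewrite -Et /=; lia.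
by exists a, j.+1.
Qed.

Lemma pell_plus_repeat t r u r' : 1 <= M -> pell_sol 1 M t r -> pell_sol 1 M u r' -> t < u ->
  exists a k, 3 <= a /\ (0 < k)%N /\ u = lucasV a 1 k.+1.
Proof.
move=> HM Ht Hu Htu.
have [a [b [Hab Hmin]]] := pell_sol_min Ht.
have [k1 [Et _]] := pell_plus_lucas quo_integral HM Hab Hmin Ht.
have Ha : 3 <= a by case: Hab; nia.
have [[|k] [Eu _]] := pell_plus_lucas quo_integral HM Hab Hmin Hu.
  have Eua : u = a by rewrite Eu.
  by have := lucasV_plus_mono Ha (leq0n k1); rewrite -Et /=; lia.
by exists a, k.+1.
Qed.

End Repeats.

(** * Square-free parts *)

Local Open Scope nat_scope.

Lemma squarefreeP M :
  reflect (0 < M /\ forall d, 1 < d -> ~~ (d * d %| M)) (squarefree M).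
Proof.
apply: (iffP andP) => -[M0 H]; split=> //.
  move=> d d1; case: (leqP d M) => [dM | Md].
    by move/forallP/(_ (@Ordinal M.+1 d dM)): H; rewrite /= d1.
  by apply/negP => /(dvdn_leq M0); nia.
by apply/forallP => d; apply/implyP; apply: H.
Qed.

Lemma is_sqfree_partP M n :
  0 < n -> reflect (squarefree M /\ exists r, n = M * r ^ 2) (is_sqfree_part M n).
Proof.
move=> n0; apply: (iffP andP) => -[sqM Hr]; split=> //.
  by have /existsP [r /eqP ->] := Hr; exists r.
have [r Er] := Hr; apply/existsP.
have M0 : 0 < M by case/andP: sqM.
have rn : r < n.+1 by rewrite Er -mulnn; case: r {Er} => [|r]; nia.
by exists (Ordinal rn); apply/eqP.
Qed.

Lemma sqfree_part_le M n : 0 < n -> is_sqfree_part M n -> M <= n.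
Proof.
by move=> n0 /(is_sqfree_partP _ n0) [_ [[|r] Er]]; move: n0; rewrite Er -mulnn; nia.
Qed.

Lemma sqfree_decomposition n : 0 < n -> exists M r, squarefree M /\ n = M * r ^ 2.
Proof.
elim/ltn_ind: n => n IH n0.
case: (boolP [exists d : 'I_n.+1, (1 < d) && (d * d %| n)])
  => [/existsP [d /andP [d1 /dvdnP [m Em]]] | Hno].
  have m0 : 0 < m by move: n0; rewrite Em; case: m {Em}.
  have dd : 4 <= d * d by nia.
  have [M [r [sqM Er]]] := IH m ltac:(nia) m0.
  by exists M, (r * d); split=> //; rewrite -!mulnn in Er *; rewrite {1}Em Er; nia.
exists n, 1; split; last by rewrite muln1.
apply/squarefreeP; split=> // d d1; apply/negP => dvd.
have dn : d < n.+1 by rewrite ltnS; apply: leq_trans (dvdn_leq n0 dvd); nia.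
by move/existsP: Hno; apply; exists (Ordinal dn); rewrite d1.
Qed.

Lemma squarefree_mulsq_inj M M' r r' : squarefree M -> squarefree M' ->
  0 < r -> 0 < r' -> M * r ^ 2 = M' * r' ^ 2 -> M = M'.
Proof.
move=> /squarefreeP [_ sqM] /squarefreeP [_ sqM'] r0 r'0 E.
set g := gcdn r r'; have g0 : 0 < g by rewrite gcdn_gt0 r0.
have [a Ea] : exists a, r = a * g by exists (r %/ g); rewrite divnK // dvdn_gcdl.
have [b Eb] : exists b, r' = b * g by exists (r' %/ g); rewrite divnK // dvdn_gcdr.
have cop : coprime (a * a) (b * b).
  suff cab : coprime a b by rewrite coprimeMl !coprimeMr cab.
  by rewrite /coprime -(eqn_pmul2r g0) mul1n muln_gcdl -Ea -Eb.
have E2 : M * (a * a) = M' * (b * b).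
  have gg : 0 < g * g by rewrite muln_gt0 g0.
  by apply/eqP; rewrite -(eqn_pmul2r gg); apply/eqP; move: E; rewrite Ea Eb -!mulnn; lia.
have a1 : a = 1.
  case: (ltngtP a 1) => // a1; first by move: r0; rewrite Ea; case: a a1 {Ea E2 cop}.
  by have := sqM' a a1; rewrite -(Gauss_dvdl _ cop) -E2 dvdn_mull.
have b1 : b = 1.
  case: (ltngtP b 1) => // b1; first by move: r'0; rewrite Eb; case: b b1 {Eb E2 cop}.
  by have := sqM b b1; rewrite coprime_sym in cop; rewrite -(Gauss_dvdl _ cop) E2 dvdn_mull.
by move: E2; rewrite a1 b1 !muln1.
Qed.

Definition sfpart (n : nat) : nat := head 0 [seq M <- iota 0 n.+1 | is_sqfree_part M n].

Lemma sfpartP n : 0 < n -> is_sqfree_part (sfpart n) n.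
Proof.
move=> n0; have [M [r [sqM Er]]] := sqfree_decomposition n0.
have HM : is_sqfree_part M n by apply/(is_sqfree_partP _ n0); split=> //; exists r.
have : M \in [seq M <- iota 0 n.+1 | is_sqfree_part M n].
  by rewrite mem_filter HM mem_iota /= add0n ltnS (sqfree_part_le n0 HM).
rewrite /sfpart; case: [seq M <- iota 0 n.+1 | is_sqfree_part M n]
  (filter_all (is_sqfree_part^~ n) (iota 0 n.+1)) => [|M' s] //= /andP [] //.
Qed.

Lemma sfpart_eq M n : 0 < n -> is_sqfree_part M n -> sfpart n = M.
Proof.
move=> n0 /(is_sqfree_partP _ n0) [sqM [r Er]].
have /(is_sqfree_partP _ n0) [sqS [r' Er']] := sfpartP n0.
have pos (k R : nat) : n = k * R ^ 2 -> 0 < R.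
  by move: n0 => /[swap] ->; case: R; rewrite ?muln0.
exact: squarefree_mulsq_inj sqS sqM (pos _ _ Er') (pos _ _ Er) (etrans (esym Er') Er).
Qed.

Lemma sfpartMsq n h : 0 < n -> 0 < h -> sfpart (n * h ^ 2) = sfpart n.
Proof.
move=> n0 h0; have /(is_sqfree_partP _ n0) [sqS [r Er]] := sfpartP n0.
have nh0 : 0 < n * h ^ 2 by rewrite muln_gt0 n0 expn_gt0 h0.
apply: sfpart_eq => //; apply/(is_sqfree_partP _ nh0); split=> //.
by exists (r * h); rewrite {1}Er expnMn mulnA.
Qed.

Lemma size_undup_rcons (T : eqType) (s : seq T) x :
  size (undup (rcons s x)) = size (undup s) + (x \notin s).
Proof.
have -> : size (undup (rcons s x)) = size (undup (x :: s)).
  by apply/perm_size/uniq_perm; rewrite ?undup_uniq // => y; rewrite !mem_undup mem_rcons.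
by rewrite /=; case: (x \in s) => /=; rewrite ?addn0 ?addn1.
Qed.

(* Each value of [f] on [s] is counted once by [undup], every later repetition once
   by [count]. *)
Lemma size_undup_map_add_repeats (P : pred nat) (f : nat -> nat) B
    (s := [seq t <- iota 1 B | P t]) :
  size (undup (map f s)) + count (fun u => has (fun t => (t < u) && (f t == f u)) s) s = size s.
Proof.
rewrite {}/s; elim: B => [|B IH] //.
rewrite -[B.+1]addn1 iotaD add1n filter_cat /=; case: (P B.+1); last by rewrite cats0.
set s := [seq t <- iota 1 B | P t] in IH *.
have s_le t : t \in s -> t <= B by rewrite mem_filter mem_iota => /andP [_]; lia.
rewrite cats1 map_rcons size_undup_rcons size_rcons -cats1 count_cat /= addn0.
have -> : count (fun u => has (fun t => (t < u) && (f t == f u)) (s ++ [:: B.+1])) s =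
          count (fun u => has (fun t => (t < u) && (f t == f u)) s) s.
  apply: eq_in_count => u /s_le uB; rewrite has_cat /= orbF.
  by rewrite [B.+1 < u]ltnNge (leqW uB) /= orbF.
have -> : has (fun t => (t < B.+1) && (f t == f B.+1)) (s ++ [:: B.+1]) = (f B.+1 \in map f s).
  rewrite has_cat /= ltnn /= orbF; apply/hasP/mapP => [[t ts /andP [_ /eqP <-]] | [t ts ->]].
    by exists t.
  by exists t; rewrite // eqxx andbT ltnS s_le.
by move: IH; case: (f B.+1 \in map f s) => /=; lia.
Qed.

Lemma sub_in_count (T : eqType) (a1 a2 : pred T) (s : seq T) :
  {in s, subpred a1 a2} -> count a1 s <= count a2 s.
Proof.
elim: s => //= y s IH sub; apply: leq_add.
  by case a1y : (a1 y) => //; rewrite (sub y (mem_head y s) a1y).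
by apply: IH => x xs; apply: sub; rewrite inE xs orbT.
Qed.

Lemma count_iota_le (P : pred nat) m n k :
  (forall x, P x -> m <= x -> x < m + k) -> count P (iota m n) <= k.
Proof.
move=> H; rewrite -size_filter -(size_iota m k); apply: uniq_leq_size.
  by rewrite filter_uniq ?iota_uniq.
by move=> x; rewrite mem_filter !mem_iota => /andP [Px /andP [mx _]]; rewrite mx H.
Qed.

Lemma count_iota_ge (P : pred nat) m n k :
  k <= n -> (forall x, m <= x < m + k -> P x) -> k <= count P (iota m n).
Proof.
move=> kn H; rewrite -(subnKC kn) iotaD count_cat.
rewrite (@eq_in_count _ _ predT) ?count_predT ?size_iota ?leq_addr // => x.
by rewrite mem_iota => /H.
Qed.

Definition iroot (e B : nat) : nat := count (fun x => x ^ e <= B) (iota 1 B).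

Lemma leq_iroot e B x : 0 < e -> 0 < x -> (x <= iroot e B) = (x ^ e <= B).
Proof.
move=> e0 x0; have xxe : x <= x ^ e by rewrite -{1}(expn1 x) leq_pexp2l.
apply/idP/idP => [le_x | xB].
  rewrite leqNgt; apply/negP => Bx.
  have : iroot e B <= x.-1.
    apply: count_iota_le => y yB _; rewrite add1n prednK // ltnNge.
    by apply: contraTN yB => xy; rewrite -ltnNge (leq_trans Bx) // leq_exp2r.
  lia.
apply: count_iota_ge => [|y /andP [y1 yx]]; first exact: leq_trans xxe xB.
by apply: leq_trans xB; rewrite leq_exp2r //; lia.
Qed.

Section CountImage.
Variables (T1 T2 : eqType) (g : T1 -> T2).

Lemma count_mem_le (r s : seq T2) : uniq s -> count (mem r) s <= size r.
Proof.
move=> us; rewrite -size_filter; apply: uniq_leq_size; first exact: filter_uniq.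
by move=> y; rewrite mem_filter => /andP [].
Qed.

Lemma count_mem_map_le (X : seq T1) (s : seq T2) :
  uniq s -> count (mem (map g X)) s <= count (fun x => g x \in s) X.
Proof.
move=> us; rewrite -!size_filter -(size_map g [seq x <- X | g x \in s]).
apply: uniq_leq_size; first exact: filter_uniq.
move=> y; rewrite mem_filter => /andP [/mapP [x xX ->] ys].
by apply/mapP; exists x; rewrite // mem_filter ys.
Qed.

Lemma count_le_inj (P : pred T1) (Q : pred T2) (X : seq T1) (s : seq T2) :
  uniq X -> {in X &, injective g} -> {in X, forall x, P x -> g x \in s /\ Q (g x)} ->
  count P X <= count Q s.
Proof.
move=> uX ginj PQ; rewrite -!size_filter -(size_map g); apply: uniq_leq_size.
  rewrite map_inj_in_uniq ?filter_uniq // => x y.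
  by rewrite !mem_filter => /andP [_ xX] /andP [_ yX]; apply: ginj.
move=> y /mapP [x]; rewrite mem_filter => /andP [Px xX] ->.
by have [gs Qg] := PQ x xX Px; rewrite mem_filter Qg.
Qed.

End CountImage.

Lemma count_predU_le (T : eqType) (a1 a2 : pred T) (s : seq T) :
  count (predU a1 a2) s <= count a1 s + count a2 s.
Proof. by rewrite -count_predUI leq_addr. Qed.

(** * Repeated square-free parts of t^2 - 4s *)

Definition sqf_disc (s : int) (t : nat) : nat := sfpart `|disc s t|%N.

Definition repeated (s : int) (B u : nat) : bool :=
  has (fun t => (t < u) && (sqf_disc s t == sqf_disc s u)) (Iset s B).

Lemma absz_disc_gt0 s B t : t \in Iset s B -> 0 < `|disc s t|%N.
Proof. by rewrite mem_filter absz_gt0 => /andP [/Num.Theory.lt0r_neq0]. Qed.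

Lemma card_N_undup s B : card_N s B = size (undup (map (sqf_disc s) (Iset s B))).
Proof.
apply/perm_size/uniq_perm; rewrite ?filter_uniq ?iota_uniq ?undup_uniq // => M.
rewrite mem_undup mem_filter; apply/andP/mapP => [[/hasP [t tI HM] _] | [t tI ->]].
  by exists t; rewrite // /sqf_disc (sfpart_eq (absz_disc_gt0 tI) HM).
have sqt := sfpartP (absz_disc_gt0 tI); split; first by apply/hasP; exists t.
have Iuniq : uniq (Iset s B) by rewrite filter_uniq ?iota_uniq.
rewrite mem_iota /= add0n ltnS (leq_trans (sqfree_part_le (absz_disc_gt0 tI) sqt)) //.
by rewrite (bigD1_seq t) //= leq_addr.
Qed.

Lemma card_N_add_repeats s B : card_N s B + count (repeated s B) (Iset s B) = card_I s B.
Proof. by rewrite card_N_undup; apply: size_undup_map_add_repeats. Qed.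

Lemma squarefree_quo_integral M : squarefree M -> pell_quo_integral (Z.of_nat M).
Proof.
move=> /squarefreeP [_ sqM]; apply: pell_quo_integral_ndvd4 => -[k Ek].
by have /negP := sqM 2 isT; apply; apply/dvdnP; exists (Z.to_nat k); lia.
Qed.

Section SfpartPell.
Local Open Scope Z_scope.

Lemma pell_sol_sfpart (n : Z) (t N : nat) : (0 < N)%N -> (0 < t)%N ->
    Z.of_nat N = Z.of_nat t * Z.of_nat t - 4 * n ->
  exists r, pell_sol n (Z.of_nat (sfpart N)) (Z.of_nat t) (Z.of_nat r).
Proof.
move=> N0 t0 EN; have /(is_sqfree_partP _ N0) [_ [r Er]] := sfpartP N0.
set M := sfpart N in Er *; exists r; rewrite /pell_sol.
by move: N0 EN; rewrite Er -mulnn; case: r {Er} => [|r]; nia.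
Qed.

End SfpartPell.

Lemma sqf_disc_neg t : sqf_disc s_neg t = sfpart (t * t + 4).
Proof. by rewrite /sqf_disc /disc /s_neg GRing.expr2; congr sfpart; lia. Qed.

Lemma Iset_neg B : Iset s_neg B = iota 1 B.
Proof. by apply/all_filterP/allP => t _; rewrite /disc /s_neg GRing.expr2; lia. Qed.

Lemma sqf_disc_pos t : 2 < t -> sqf_disc s_pos t = sfpart (t * t - 4).
Proof. by move=> t2; rewrite /sqf_disc /disc /s_pos GRing.expr2; congr sfpart; nia. Qed.

Lemma Iset_pos B : Iset s_pos B = [seq t <- iota 1 B | 2 < t].
Proof. by apply: eq_filter => t; rewrite /disc /s_pos GRing.expr2; apply/idP/idP; nia. Qed.

Section RepeatedLucas.
Local Open Scope Z_scope.

Lemma repeated_neg_lucas B u : repeated s_neg B u ->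
  exists a j, (0 < a)%N /\ (0 < j)%N /\ Z.of_nat u = lucasV (Z.of_nat a) (-1) (2 * j).+1.
Proof.
move=> /hasP [t tI /andP [tu /eqP Et]].
rewrite Iset_neg mem_iota in tI; rewrite !sqf_disc_neg in Et.
have [r Hr] := @pell_sol_sfpart (-1) t (t * t + 4) ltac:(lia) ltac:(lia) ltac:(lia).
have [r' Hr'] := @pell_sol_sfpart (-1) u (u * u + 4) ltac:(lia) ltac:(lia) ltac:(lia).
rewrite Et in Hr; set M := sfpart (u * u + 4) in Hr Hr'.
have /andP [sqM _] : is_sqfree_part M (u * u + 4) by apply: sfpartP; lia.
have M2 : 2 <= Z.of_nat M.
  have /squarefreeP [M0 _] := sqM; case: Hr => t1 [r1 E].
  case: (ltngtP M 1) => [||M1]; [lia | lia | rewrite M1 in E].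
  have tr : Z.of_nat t + 1 <= Z.of_nat r by nia.
  have t_eq1 : Z.of_nat t = 1 by nia.
  by rewrite t_eq1 in E; case: (Z.le_gt_cases (Z.of_nat r) 2); nia.
have [a [j [a1 [j0 Eu]]]] := pell_minus_repeat (squarefree_quo_integral sqM) M2 Hr Hr' ltac:(lia).
by exists (Z.to_nat a), j; rewrite Z2Nat.id; lia.
Qed.

Lemma repeated_pos_lucas B u : (2 < u)%N -> repeated s_pos B u ->
  exists a k, (2 < a)%N /\ (0 < k)%N /\ Z.of_nat u = lucasV (Z.of_nat a) 1 k.+1.
Proof.
move=> u2 /hasP [t tI /andP [tu /eqP Et]].
move: tI; rewrite Iset_pos mem_filter => /andP [t2 _].
rewrite !sqf_disc_pos // in Et.
have [r Hr] := @pell_sol_sfpart 1 t (t * t - 4) ltac:(nia) ltac:(lia) ltac:(nia).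
have [r' Hr'] := @pell_sol_sfpart 1 u (u * u - 4) ltac:(nia) ltac:(lia) ltac:(nia).
rewrite Et in Hr; set M := sfpart (u * u - 4) in Hr Hr'.
have /andP [sqM _] : is_sqfree_part M (u * u - 4) by apply: sfpartP; nia.
have M1 : 1 <= Z.of_nat M by have /squarefreeP [M0 _] := sqM; lia.
have [a [k [a3 [k0 Eu]]]] := pell_plus_repeat (squarefree_quo_integral sqM) M1 Hr Hr' ltac:(lia).
by exists (Z.to_nat a), k; rewrite Z2Nat.id; lia.
Qed.

End RepeatedLucas.

(* [(a^3 + 3a)^2 + 4 = (a^2 + 4) (a^2 + 1)^2] *)
Lemma repeats_neg_lower B :
  count (fun x => x * x * x + 3 * x <= B) (iota 1 B) <= count (repeated s_neg B) (Iset s_neg B).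
Proof.
apply: (count_le_inj (g := fun x => x * x * x + 3 * x)) (iota_uniq _ _) _ _ => [x y _ _ /= Exy | x].
  by case: (ltngtP x y) => // lt; move: Exy; have := ltn_mul (ltn_mul lt lt) lt; lia.
rewrite Iset_neg !mem_iota => /andP [x1 _] xB; split; first lia.
apply/hasP; exists x; first by rewrite Iset_neg mem_iota; lia.
rewrite (_ : x < _) /=; last nia.
rewrite !sqf_disc_neg; apply/eqP.
have -> : (x * x * x + 3 * x) * (x * x * x + 3 * x) + 4 = (x * x + 4) * (x * x + 1) ^ 2.
  by rewrite -mulnn; nia.
by rewrite sfpartMsq //; lia.
Qed.

(* [(a^2 - 2)^2 - 4 = (a^2 - 4) a^2] *)
Lemma repeats_pos_lower B :
  count (fun x => x * x - 2 <= B) (iota 3 B) <= count (repeated s_pos B) (Iset s_pos B).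
Proof.
apply: (count_le_inj (g := fun x => x * x - 2)) (iota_uniq _ _) _ _ => [x y | x].
  rewrite !mem_iota => /andP [x3 _] /andP [y3 _] /= Exy.
  have := leq_mul x3 x3; have := leq_mul y3 y3.
  by case: (ltngtP x y) => // lt; move: Exy; have := ltn_mul lt lt; lia.
rewrite mem_iota Iset_pos mem_filter mem_iota => /andP [x3 _] xB.
have x2 : x < x * x - 2 by nia.
split; first by apply/andP; split; lia.
apply/hasP; exists x; first by rewrite Iset_pos mem_filter mem_iota; apply/andP; split; lia.
rewrite x2 /= !sqf_disc_pos; [apply/eqP | lia | lia].
have -> : (x * x - 2) * (x * x - 2) - 4 = (x * x - 4) * x ^ 2 by rewrite -mulnn; nia.
by rewrite sfpartMsq //; nia.
Qed.

Lemma repeats_neg_upper B : count (repeated s_neg B) (Iset s_neg B) <=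
  count (fun x => x * x * x + 3 * x <= B) (iota 1 B) + iroot 5 B * trunc_log 2 B.
Proof.
set pairs := [seq Z.to_nat (lucasV (Z.of_nat a) (-1) (2 * j).+1)
               | a <- iota 1 (iroot 5 B), j <- iota 1 (trunc_log 2 B)].
rewrite Iset_neg; apply: (@leq_trans (count (predU
  (mem (map (fun x => x * x * x + 3 * x) (iota 1 B))) (mem pairs)) (iota 1 B))).
  apply: sub_in_count => u; rewrite mem_iota => uB rep.
  have [a [j [a0 [j0 Eu]]]] := repeated_neg_lucas rep.
  have a1 : Z.le 1 (Z.of_nat a) by lia.
  apply/orP; case: (ltngtP j 1) => [|j1|j_eq1]; first lia.
    right; have -> : u = Z.to_nat (lucasV (Z.of_nat a) (-1) (2 * j).+1) by rewrite -Eu Nat2Z.id.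
    apply/allpairsP; exists (a, j); split=> //; rewrite /= mem_iota add1n ltnS ?a0 ?j0 /=.
      rewrite leq_iroot // !expnS expn0 muln1.
      have := @lucasV_minus_mono _ a1 4 (2 * j) ltac:(lia); rewrite -Eu lucasV_minus_5; nia.
    apply: trunc_log_max => //; have := @lucasV_minus_odd_ge _ a1 j; lia.
  left; apply/mapP; exists a; rewrite ?mem_iota; move: Eu; rewrite j_eq1 lucasV_minus_3; lia.
apply: leq_trans (count_predU_le _ _ _) _; apply: leq_add.
  apply: leq_trans (count_mem_map_le _ _ (iota_uniq 1 B)) _.
  by apply: sub_in_count => x _; rewrite mem_iota; lia.
by apply: leq_trans (count_mem_le _ (iota_uniq _ _)) _; rewrite size_allpairs !size_iota.
Qed.

Lemma repeats_pos_upper B : count (repeated s_pos B) (Iset s_pos B) <=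
  count (fun x => x * x - 2 <= B) (iota 3 B) + iroot 3 B * trunc_log 2 B.
Proof.
set pairs := [seq Z.to_nat (lucasV (Z.of_nat a) 1 m)
               | a <- iota 2 (iroot 3 B), m <- iota 1 (trunc_log 2 B)].
apply: (@leq_trans (count (predU
  (mem (map (fun x => x * x - 2) (iota 3 B))) (mem pairs)) (iota 1 B))).
  rewrite Iset_pos count_filter; apply: sub_in_count => u; rewrite mem_iota => uB /andP [rep u2].
  have [a [k [a2 [k0 Eu]]]] := repeated_pos_lucas u2 rep.
  have a3 : Z.le 3 (Z.of_nat a) by lia.
  have := @lucasV_plus_ge_pow _ a3 k; rewrite -Eu => pow_le.
  apply/orP; case: (ltngtP k 1) => [|k1|k_eq1]; first lia.
    right; have -> : u = Z.to_nat (lucasV (Z.of_nat a) 1 k.+1) by rewrite -Eu Nat2Z.id.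
    apply/allpairsP; exists (a, k.+1); split=> //; rewrite /= mem_iota.
      suff : a.-1 <= iroot 3 B by lia.
      rewrite leq_iroot //; last lia.
      have : Z.le ((Z.of_nat a - 1) ^ 3) ((Z.of_nat a - 1) ^ Z.of_nat k.+1).
        by apply: Z.pow_le_mono_r; lia.
      rewrite !expnS expn0 muln1; lia.
    rewrite add1n /= ltnS; apply: trunc_log_max => //.
    have : Z.le (2 ^ Z.of_nat k.+1) ((Z.of_nat a - 1) ^ Z.of_nat k.+1).
      by apply: Z.pow_le_mono_l; lia.
    lia.
  left; apply/mapP; exists a; rewrite ?mem_iota; move: Eu; rewrite k_eq1 lucasV_plus_2; nia.
apply: leq_trans (count_predU_le _ _ _) _; apply: leq_add.
  apply: leq_trans (count_mem_map_le _ _ (iota_uniq 1 B)) _.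
  by apply: sub_in_count => x; rewrite !mem_iota; nia.
by apply: leq_trans (count_mem_le _ (iota_uniq _ _)) _; rewrite size_allpairs !size_iota.
Qed.

Lemma count_cubic_iroot B :
  (iroot 3 B).-1 <= count (fun x => x * x * x + 3 * x <= B) (iota 1 B) <= iroot 3 B.
Proof.
have cube x : x ^ 3 = x * x * x by rewrite !expnS expn0 muln1 mulnA.
apply/andP; split.
  apply: count_iota_ge => [|x /andP [x1 xq]].
    by apply: leq_trans (leq_pred _) (leq_trans (count_size _ _) _); rewrite size_iota.
  have : x.+1 <= iroot 3 B by lia.
  by rewrite leq_iroot // cube; nia.
apply: count_iota_le => x xB x1; rewrite add1n ltnS leq_iroot // cube; nia.
Qed.

Lemma count_quadratic_iroot B :
  iroot 2 B - 2 <= count (fun x => x * x - 2 <= B) (iota 3 B) <= iroot 2 B.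
Proof.
have sq x : x ^ 2 = x * x by rewrite !expnS expn0 muln1.
apply/andP; split.
  apply: count_iota_ge => [|x /andP [x3 xq]].
    by apply: leq_trans (leq_subr _ _) (leq_trans (count_size _ _) _); rewrite size_iota.
  have : x <= iroot 2 B by lia.
  by rewrite leq_iroot ?sq //; [lia | lia].
apply: count_iota_le => x xB x3.
have : x.-1 <= iroot 2 B by rewrite leq_iroot ?sq //; nia.
lia.
Qed.

(** * Asymptotics *)

Local Open Scope R_scope.

Lemma Rpower_gt0 x y : 0 < Rpower x y.
Proof. exact: exp_pos. Qed.

Lemma INR_expn x e : INR (x ^ e) = INR x ^ e.
Proof. by elim: e => [|e IH] //; rewrite expnS mult_INR IH. Qed.

Lemma le_INR_leq m n : (m <= n)%N -> INR m <= INR n.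
Proof. by move=> /leP; apply: le_INR. Qed.

Lemma INR_subn_ge m n : INR m - INR n <= INR (m - n).
Proof.
case: (leqP n m) => [nm | mn]; first by rewrite minus_INR; [lra | apply/leP].
by have := le_INR_leq (ltnW mn); have := pos_INR (m - n); lra.
Qed.

Lemma Rpower_inv_pow (B e : nat) : (0 < B)%N -> (0 < e)%N -> Rpower (INR B) (/ INR e) ^ e = INR B.
Proof.
move=> B0 e0; have e0' : INR e <> 0 by apply: not_0_INR; lia.
rewrite -Rpower_pow; last exact: Rpower_gt0.
by rewrite Rpower_mult Rinv_l // Rpower_1 //; apply: lt_0_INR; lia.
Qed.

Lemma le_Rpower_inv (x e B : nat) :
  (0 < e)%N -> (x ^ e <= B)%N -> INR x <= Rpower (INR B) (/ INR e).
Proof.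
move=> e0 xB; case: (posnP x) => [-> | x0]; first exact/Rlt_le/Rpower_gt0.
have B0 : (0 < B)%N by apply: leq_trans xB; rewrite expn_gt0 x0.
have e0' : 0 < INR e by apply: lt_0_INR; lia.
have x0' : 0 < INR x by apply: lt_0_INR; lia.
have -> : INR x = Rpower (INR (x ^ e)) (/ INR e).
  by rewrite INR_expn -Rpower_pow // Rpower_mult Rinv_r ?Rpower_1 //; lra.
apply: Rle_Rpower_l; first exact/Rlt_le/Rinv_0_lt_compat.
by split; [apply: lt_0_INR; apply/ltP; rewrite expn_gt0 x0 | apply/le_INR/leP].
Qed.

Lemma iroot_le_Rpower e B : (0 < e)%N -> INR (iroot e B) <= Rpower (INR B) (/ INR e).
Proof.
move=> e0; case: (posnP (iroot e B)) => [-> | q0]; first exact/Rlt_le/Rpower_gt0.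
by apply: le_Rpower_inv; rewrite // -leq_iroot.
Qed.

Lemma Rpower_lt_iroot e B :
  (0 < e)%N -> (0 < B)%N -> Rpower (INR B) (/ INR e) < INR (iroot e B) + 1.
Proof.
move=> e0 B0; apply: Rnot_le_lt => le_q.
have : ((iroot e B).+1 ^ e <= B)%N.
  apply/leP/INR_le; rewrite INR_expn -(Rpower_inv_pow B0 e0) S_INR.
  by apply: pow_incr; split=> //; apply/Rplus_le_le_0_compat/Rle_0_1/pos_INR.
by rewrite -leq_iroot // ltnn.
Qed.

Lemma trunc_log2_le B : INR (trunc_log 2 B) <= 60 * Rpower (INR B) (1 / 30).
Proof.
case: (posnP B) => [-> | B0]; first by rewrite trunc_log0 /=; have := Rpower_gt0 0 (1 / 30); lra.
set k := trunc_log 2 B.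
have le_kB : 2 ^ k <= INR B.
  by rewrite -(INR_expn 2 k) /=; apply/le_INR/leP/trunc_logP.
have := ln_le _ _ (pow_lt 2 k Rlt_0_2) le_kB; rewrite ln_pow; last lra.
have := exp_ineq1_le (1 / 30 * ln (INR B)); have := ln_lt_2; have := pos_INR k.
rewrite /Rpower; nra.
Qed.

Lemma is_lim_seq_Rpower_opp c : 0 < c -> is_lim_seq (fun n => Rpower (INR n) (- c)) 0.
Proof.
move=> c0; have : is_lim_seq (fun n => Rpower (INR n) c) p_infty.
  apply/is_lim_seq_spec => M; have M1 : 0 < Rmax 1 M by apply: Rlt_le_trans (Rmax_l 1 M); lra.
  have := proj2 (is_lim_seq_spec INR p_infty) is_lim_seq_INR (Rpower (Rmax 1 M) (/ c)).
  apply: filter_imp => n Hn; apply: Rle_lt_trans (Rmax_r 1 M) _.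
  have <- : Rpower (Rpower (Rmax 1 M) (/ c)) c = Rmax 1 M.
    by rewrite Rpower_mult Rinv_l ?Rpower_1 //; lra.
  by apply: Rlt_Rpower_l => //; split; [exact: Rpower_gt0 | exact: Hn].
move=> /is_lim_seq_inv /(_ ltac:(discriminate)).
by apply: is_lim_seq_ext => n; rewrite Rpower_Ropp.
Qed.

Lemma is_lim_seq_ratio_one (D : nat -> R) (r c a1 a2 : R) : 0 < r -> 0 < c ->
  (forall B, (0 < B)%N ->
     Rpower (INR B) r - a1 <= D B <= Rpower (INR B) r + a2 * Rpower (INR B) (r - c)) ->
  is_lim_seq (fun B => D B / Rpower (INR B) r) 1.
Proof.
move=> r0 c0 bounds.
apply: (is_lim_seq_le_le_loc (fun B => 1 - a1 * Rpower (INR B) (- r)) _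
                              (fun B => 1 + a2 * Rpower (INR B) (- c))).
- exists 1%N => B /leP B0; have [lo hi] := bounds B B0.
  have Br := Rpower_gt0 (INR B) r; have Bc := Rpower_gt0 (INR B) c.
  rewrite /Rminus Rpower_plus !Rpower_Ropp in hi *; rewrite /Rdiv.
  split.
    have -> : 1 + - (a1 * / Rpower (INR B) r) = (Rpower (INR B) r + - a1) * / Rpower (INR B) r.
      by field; lra.
    by apply: Rmult_le_compat_r; [exact/Rlt_le/Rinv_0_lt_compat | lra].
  have -> : 1 + a2 * / Rpower (INR B) c =
            (Rpower (INR B) r + a2 * (Rpower (INR B) r * / Rpower (INR B) c)) * / Rpower (INR B) r.
    by field; lra.
  by apply: Rmult_le_compat_r; [exact/Rlt_le/Rinv_0_lt_compat | lra].
- have := is_lim_seq_minus' _ _ 1 (a1 * 0) (is_lim_seq_const 1)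
            (is_lim_seq_scal_l _ a1 _ (is_lim_seq_Rpower_opp r0)).
  by rewrite Rmult_0_r Rminus_0_r.
- have := is_lim_seq_plus' _ _ 1 (a2 * 0) (is_lim_seq_const 1)
            (is_lim_seq_scal_l _ a2 _ (is_lim_seq_Rpower_opp c0)).
  by rewrite Rmult_0_r Rplus_0_r.
Qed.

Lemma card_I_sub_card_N s B :
  INR (card_I s B) - INR (card_N s B) = INR (count (repeated s B) (Iset s B)).
Proof. by rewrite -(card_N_add_repeats s B) plus_INR; ring. Qed.

Lemma repeats_neg_bounds B : (0 < B)%N ->
  Rpower (INR B) (1 / 3) - 2 <= INR (count (repeated s_neg B) (Iset s_neg B)) <=
  Rpower (INR B) (1 / 3) + 60 * Rpower (INR B) (1 / 3 - 1 / 10).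
Proof.
move=> B0; have [lo hi] := andP (count_cubic_iroot B).
have q_lt := @Rpower_lt_iroot 3 B isT B0; have q_le := @iroot_le_Rpower 3 B isT.
have r5 := @iroot_le_Rpower 5 B isT; have lg := trunc_log2_le B.
have -> : 1 / 3 - 1 / 10 = / INR 5 + 1 / 30 by rewrite /=; field.
rewrite Rpower_plus (_ : 1 / 3 = / INR 3); last by rewrite /=; field.
split.
  have := le_INR_leq (leq_trans lo (repeats_neg_lower B)); rewrite -subn1.
  by have := INR_subn_ge (iroot 3 B) 1; rewrite [INR 1]/=; lra.
apply: Rle_trans (le_INR_leq (repeats_neg_upper B)) _; rewrite plus_INR mult_INR.
have := le_INR_leq hi; have := pos_INR (trunc_log 2 B); have := pos_INR (iroot 5 B).
have := Rpower_gt0 (INR B) (/ INR 5); nra.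
Qed.

Lemma repeats_pos_bounds B : (0 < B)%N ->
  Rpower (INR B) (1 / 2) - 3 <= INR (count (repeated s_pos B) (Iset s_pos B)) <=
  Rpower (INR B) (1 / 2) + 60 * Rpower (INR B) (1 / 2 - 2 / 15).
Proof.
move=> B0; have [lo hi] := andP (count_quadratic_iroot B).
have q_lt := @Rpower_lt_iroot 2 B isT B0; have q_le := @iroot_le_Rpower 2 B isT.
have r3 := @iroot_le_Rpower 3 B isT; have lg := trunc_log2_le B.
have -> : 1 / 2 - 2 / 15 = / INR 3 + 1 / 30 by rewrite /=; field.
rewrite Rpower_plus (_ : 1 / 2 = / INR 2); last by rewrite /=; field.
split.
  have := le_INR_leq (leq_trans lo (repeats_pos_lower B)).
  by have := INR_subn_ge (iroot 2 B) 2; rewrite [INR 2]/= in q_lt *; lra.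
apply: Rle_trans (le_INR_leq (repeats_pos_upper B)) _; rewrite plus_INR mult_INR.
have := le_INR_leq hi; have := pos_INR (trunc_log 2 B); have := pos_INR (iroot 3 B).
have := Rpower_gt0 (INR B) (/ INR 3); nra.
Qed.

Theorem theorem4p5 :
  is_lim_seq (fun B : nat =>
      (INR (card_I s_neg B) - INR (card_N s_neg B)) / Rpower (INR B) (1/3))
    1 /\
  is_lim_seq (fun B : nat =>
      (INR (card_I s_pos B) - INR (card_N s_pos B)) / Rpower (INR B) (1/2))
    1.
Proof.
split.
  apply: (@is_lim_seq_ratio_one _ _ (1 / 10) 2 60); [lra | lra | move=> B B0].
  by rewrite card_I_sub_card_N; apply: repeats_neg_bounds.
apply: (@is_lim_seq_ratio_one _ _ (2 / 15) 3 60); [lra | lra | move=> B B0].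
by rewrite card_I_sub_card_N; apply: repeats_pos_bounds.
Qed.
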